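(* Let $a$ be a positive integer and for $m\in\mathbb{N}$ let $A_m=\{n\in\mathbb{N}:n<F_m^{1/a}\}$. Then for every $\beta\in[0,1]$, $$\frac{\#\{n\in A_m:\{\mathfrak F^{-1}(n^a)\}\le\beta\}}{\#A_m}=\frac{\phi^{\beta/a}-1}{\phi^{1/a}-1}+O(m\phi^{-m/a})\quad(m\to\infty).$$
   Context: $F$: $F_1=1,F_2=2,F_{n+2}=F_{n+1}+F_n$; $\phi$ is the golden ratio; $\mathfrak F(x)=\frac{\phi}{\sqrt5}(\phi^x+\phi^{-x}\cos(\pi x)\phi^{-2})$, which is increasing on $[1,\infty)$ with $\mathfrak F(n)=F_n$, and $\mathfrak F^{-1}$ is its inverse on $[1,\infty)$; $\{y\}$ is the fractional part of $y$. *)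

From Stdlib Require Import Reals Lra Lia List ClassicalEpsilon.
Open Scope R_scope.

(* Fibonacci with F_1 = 1, F_2 = 2, F_{n+2} = F_{n+1} + F_n (and F_0 = 1). *)
Fixpoint fib (n : nat) : nat :=
  match n with
  | O => 1%nat
  | S O => 1%nat
  | S (S k as k1) => (fib k1 + fib k)%nat
  end.

Definition phi : R := (1 + sqrt 5) / 2.

Definition FF (x : R) : R :=
  phi / sqrt 5 * (Rpower phi x + Rpower phi (- x) * cos (PI * x) * Rpower phi (-2)).

Definition FFinv (y : R) : R :=
  epsilon (inhabits 1) (fun x => 1 <= x /\ FF x = y).

(* fractional part {y} = y - floor y  (Int_part = floor) *)
Definition frac (y : R) : R := y - IZR (Int_part y).

Definition inA (a m n : nat) : bool :=
  if Rlt_dec (INR n) (Rpower (INR (fib m)) (1 / INR a)) then true else false.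

(* Every element of A_m is <= F_m (as F_m >= 1, a >= 1), so we enumerate 1..F_m. *)
Definition cardA (a m : nat) : nat :=
  length (filter (inA a m) (seq 1 (fib m))).

Definition cardA_beta (a m : nat) (beta : R) : nat :=
  length (filter (fun n => inA a m n &&
      (if Rle_dec (frac (FFinv (INR n ^ a))) beta then true else false))%bool
    (seq 1 (fib m))).

From Stdlib Require Import Reals Lra Lia List ClassicalEpsilon.
From Coquelicot Require Import Coquelicot.
Open Scope R_scope.

(* Put q = phi^(1/a) [growth] and G = (phi/sqrt 5)^(1/a) [growth_coef].  Since FF is
   increasing on [2, oo) with FF K = F_K, an n with F_K <= n^a < F_(K+1) has
   floor (FFinv (n^a)) = K, and {FFinv (n^a)} <= beta exactly when n <= FF (K + beta)^(1/a).
   Binet's formula gives FF t = (phi/sqrt 5) phi^t + O(1), and y |-> y^(1/a) is 1-Lipschitz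
   on [1, oo), so the n in the block [F_K^(1/a), F_(K+1)^(1/a)) that are counted number
   G q^K (q^beta - 1) + O(1).  Summing the blocks below F_m^(1/a) telescopes to
   G q^m (q^beta - 1)/(q - 1) + O(m), while #A_m = G q^m + O(1); the quotient differs from
   (q^beta - 1)/(q - 1) by O(m q^-m). *)

Lemma sqrt5_sqr : sqrt 5 * sqrt 5 = 5.
Proof. apply sqrt_sqrt; lra. Qed.

Lemma sqrt5_bounds : 2 < sqrt 5 < 3.
Proof. pose proof sqrt5_sqr; pose proof (sqrt_pos 5); nra. Qed.

Lemma phi_sqr : phi * phi = phi + 1.
Proof. unfold phi; pose proof sqrt5_sqr; nra. Qed.

Lemma phi_bounds : 1.6 < phi < 1.7.
Proof. unfold phi; pose proof sqrt5_sqr; pose proof (sqrt_pos 5); split; nra. Qed.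

Lemma phi_pos : 0 < phi.
Proof. pose proof phi_bounds; lra. Qed.

Definition psi : R := 1 - phi.

Lemma psi_sqr : psi * psi = psi + 1.
Proof. unfold psi; pose proof phi_sqr; nra. Qed.

Lemma psi_opp_inv : psi = - / phi.
Proof.
  pose proof phi_sqr; pose proof phi_pos.
  apply Rmult_eq_reg_l with phi; [|lra].
  rewrite <- Ropp_mult_distr_r, Rinv_r by lra; unfold psi; lra.
Qed.

Lemma pow_SS_golden x n : x * x = x + 1 -> x ^ S (S n) = x ^ S n + x ^ n.
Proof. intros Hx; simpl; rewrite <- Rmult_assoc, Hx; ring. Qed.

Lemma cos_PI_INR k : cos (PI * INR k) = (-1) ^ k.
Proof.
  induction k as [|k IH]; [simpl; rewrite Rmult_0_r; apply cos_0|].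
  rewrite S_INR, Rmult_plus_distr_l, Rmult_1_r, neg_cos, IH; simpl; ring.
Qed.

Lemma FF_INR_binet k : FF (INR k) = (phi ^ S k - psi ^ S k) / sqrt 5.
Proof.
  unfold FF.
  replace (-2) with (- INR 2) by (simpl; ring).
  rewrite !Rpower_Ropp, !Rpower_pow, cos_PI_INR by exact phi_pos.
  rewrite psi_opp_inv; replace (- / phi) with (-1 * / phi) by ring.
  rewrite Rpow_mult_distr, pow_inv.
  pose proof phi_pos; pose proof sqrt5_bounds; pose proof (pow_lt phi k phi_pos).
  simpl; field; lra.
Qed.

Lemma binet_formula k : INR (fib k) = (phi ^ S k - psi ^ S k) / sqrt 5.
Proof.
  pose proof sqrt5_bounds.
  assert (Hdiff : phi - psi = sqrt 5) by (unfold psi, phi; field).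
  assert (Hpair : forall k, INR (fib k) = (phi ^ S k - psi ^ S k) / sqrt 5 /\
                        INR (fib (S k)) = (phi ^ S (S k) - psi ^ S (S k)) / sqrt 5).
  { induction k0 as [|k0 [IH1 IH2]].
    - assert (Hsq : phi ^ 2 - psi ^ 2 = sqrt 5)
        by (rewrite <- Hdiff; unfold psi; ring_simplify; lra).
      simpl in Hsq |- *; rewrite !Rmult_1_r in Hsq |- *.
      rewrite Hdiff, Hsq; split; field; lra.
    - split; [exact IH2|].
      change (fib (S (S k0))) with (fib (S k0) + fib k0)%nat.
      rewrite plus_INR, IH1, IH2, (pow_SS_golden phi (S k0)),
        (pow_SS_golden psi (S k0)) by (apply phi_sqr || apply psi_sqr).
      field; lra. }
  apply Hpair.
Qed.

Lemma FF_INR k : FF (INR k) = INR (fib k).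
Proof. rewrite FF_INR_binet, binet_formula; reflexivity. Qed.

Definition binet_c : R := phi / sqrt 5.

Lemma binet_c_bounds : 0 < binet_c < 1.
Proof.
  unfold binet_c; pose proof phi_bounds; pose proof sqrt5_bounds.
  split; [apply Rdiv_lt_0_compat; lra|].
  apply Rmult_lt_reg_r with (sqrt 5); [lra|]; field_simplify; unfold phi in *; lra.
Qed.

Lemma binet_c_phi_gt_1 : 1 < binet_c * phi.
Proof.
  pose proof sqrt5_bounds.
  replace (binet_c * phi) with ((phi + 1) / sqrt 5)
    by (unfold binet_c; rewrite <- phi_sqr; field; lra).
  apply Rmult_lt_reg_r with (sqrt 5); [lra|]; field_simplify; unfold phi; lra.
Qed.

Lemma Rpower_phi_2 : Rpower phi 2 = phi * phi.
Proof.
  replace 2 with (INR 2) by (simpl; lra); rewrite Rpower_pow by exact phi_pos; simpl; ring.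
Qed.

Lemma Rpower_phi_le_1 t : 0 <= t -> Rpower phi (- t) <= 1.
Proof.
  intros Ht; rewrite <- (Rpower_O phi phi_pos).
  apply Rle_Rpower; pose proof phi_bounds; lra.
Qed.

Lemma FF_binet_approx t : 0 <= t -> Rabs (FF t - binet_c * Rpower phi t) <= 1.
Proof.
  intros Ht.
  replace (FF t - binet_c * Rpower phi t)
    with (binet_c * (Rpower phi (- t) * Rpower phi (-2)) * cos (PI * t))
    by (unfold FF, binet_c; ring).
  set (k := binet_c * (Rpower phi (- t) * Rpower phi (-2))).
  assert (Hk : 0 <= k <= 1).
  { assert (Rpower phi (-2) <= 1)
      by (replace (-2) with (- (2)) by ring; apply Rpower_phi_le_1; lra).
    pose proof (Rpower_phi_le_1 t Ht); pose proof binet_c_bounds.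
    pose proof (exp_pos (- t * ln phi)); pose proof (exp_pos (-2 * ln phi)).
    unfold k, Rpower in *; split.
    - apply Rmult_le_pos; [lra|]; apply Rmult_le_pos; lra.
    - apply Rle_trans with (binet_c * (1 * 1)); [|lra].
      apply Rmult_le_compat_l; [lra|]; apply Rmult_le_compat; lra. }
  assert (Hcos : Rabs (cos (PI * t)) <= 1) by (apply Rabs_le, COS_bound).
  rewrite Rabs_mult, (Rabs_right k) by lra.
  pose proof (Rabs_pos (cos (PI * t))); nra.
Qed.

Lemma FF_lt_3 x : 0 <= x < 2 -> FF x < 3.
Proof.
  intros Hx; pose proof (FF_binet_approx x ltac:(lra)) as Happrox.
  apply Rabs_le_between in Happrox.
  assert (Rpower phi x < phi * phi).
  { rewrite <- Rpower_phi_2; apply Rpower_lt; pose proof phi_bounds; lra. }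
  assert (binet_c * (phi * phi) < 2).
  { unfold binet_c; rewrite phi_sqr; unfold phi; pose proof sqrt5_bounds; pose proof sqrt5_sqr.
    apply Rmult_lt_reg_r with (sqrt 5); [lra|]; field_simplify; nra. }
  pose proof binet_c_bounds; nra.
Qed.

Lemma ln_phi_ge : 1 / 3 <= ln phi.
Proof.
  destruct (Rle_lt_dec (1 / 3) (ln phi)) as [h|h]; [exact h|exfalso].
  assert (phi < exp (1 / 3))
    by (rewrite <- (exp_ln phi phi_pos); apply exp_increasing, h).
  assert (exp (1 / 3) * exp (1 / 3) * exp (1 / 3) = exp 1)
    by (rewrite <- !exp_plus; f_equal; lra).
  pose proof exp_le_3; pose proof phi_bounds; pose proof (exp_pos (1 / 3)); nra.
Qed.

Definition FF' (x : R) : R :=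
  binet_c * (ln phi * Rpower phi x
    - Rpower phi (-2) * Rpower phi (- x) * (ln phi * cos (PI * x) + PI * sin (PI * x))).

Lemma is_derive_FF x : is_derive FF x (FF' x).
Proof.
  apply is_derive_ext with
    (fun x => binet_c * (exp (x * ln phi) + exp (- x * ln phi) * cos (PI * x) * Rpower phi (-2))).
  { intros t; unfold FF, binet_c, Rpower at 1 2; reflexivity. }
  auto_derive; [auto|]; unfold FF', Rpower; ring.
Qed.

Lemma continuous_FF x : continuity_pt FF x.
Proof.
  apply continuity_pt_filterlim, (ex_derive_continuous FF).
  exists (FF' x); apply is_derive_FF.
Qed.

Lemma FF'_pos x : 2 <= x -> 0 < FF' x.
Proof.
  intros Hx; unfold FF'.
  pose proof ln_phi_ge; pose proof phi_bounds; pose proof binet_c_bounds.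
  pose proof PI_RGT_0; pose proof PI_4.
  set (l := ln phi) in *; set (s := l * cos (PI * x) + PI * sin (PI * x)).
  set (e := Rpower phi (-2) * Rpower phi (- x)).
  assert (Hgrow : phi + 1 <= Rpower phi x)
    by (rewrite <- phi_sqr, <- Rpower_phi_2; apply Rle_Rpower; lra).
  assert (He : 0 < e < 0.16).
  { assert (Hinv : Rpower phi (-2) * (phi + 1) = 1).
    { rewrite <- phi_sqr, <- Rpower_phi_2, <- Rpower_plus, <- (Rpower_O phi) by lra.
      f_equal; lra. }
    assert (Rpower phi (- x) <= Rpower phi (-2)) by (apply Rle_Rpower; lra).
    assert (0 < Rpower phi (- x)) by apply exp_pos.
    assert (0 < Rpower phi (-2) < 0.4) by (split; [apply exp_pos|nra]).
    unfold e; split; [nra|].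
    apply Rle_lt_trans with (Rpower phi (-2) * Rpower phi (-2)); [|nra].
    apply Rmult_le_compat_l; lra. }
  assert (Hs : Rabs s <= l + 4).
  { unfold s; eapply Rle_trans; [apply Rabs_triang|].
    rewrite !Rabs_mult, (Rabs_right l), (Rabs_right PI) by lra.
    pose proof (Rabs_pos (cos (PI * x))); pose proof (Rabs_pos (sin (PI * x))).
    assert (Rabs (cos (PI * x)) <= 1) by (apply Rabs_le, COS_bound).
    assert (Rabs (sin (PI * x)) <= 1) by (apply Rabs_le, SIN_bound).
    nra. }
  apply Rabs_le_between in Hs.
  assert (e * s <= 0.16 * (l + 4)) by nra.
  assert (2.6 * l <= l * Rpower phi x) by (rewrite Rmult_comm; apply Rmult_le_compat_l; lra).
  apply Rmult_lt_0_compat; lra.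
Qed.

Lemma FF_increasing x y : 2 <= x -> x < y -> FF x < FF y.
Proof.
  intros Hx Hxy.
  destruct (MVT_gen FF x y FF') as [c [Hc Heq]].
  - intros t _; apply is_derive_FF.
  - intros t _; apply continuous_FF.
  - rewrite Rmin_left, Rmax_right in Hc by lra.
    pose proof (FF'_pos c ltac:(lra)); nra.
Qed.

Lemma FF_le_increasing x y : 2 <= x -> x <= y -> FF x <= FF y.
Proof.
  intros Hx [Hxy|<-]; [left; apply FF_increasing|right]; auto.
Qed.

Lemma le_3_INR n : (3 <= n)%nat -> 3 <= INR n.
Proof. intros Hn; pose proof (le_INR _ _ Hn); simpl in *; lra. Qed.

Lemma fib_le_S n : (fib n <= fib (S n))%nat.
Proof. destruct n; simpl; lia. Qed.

Lemma fib_monotone n m : (n <= m)%nat -> (fib n <= fib m)%nat.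
Proof. induction 1; [lia|]; pose proof (fib_le_S m); lia. Qed.

Lemma fib_ge_1 n : 1 <= INR (fib n).
Proof. pose proof (le_INR _ _ (fib_monotone 0 n ltac:(lia))); simpl in *; lra. Qed.

Lemma fib_ge_3 n : (3 <= n)%nat -> 3 <= INR (fib n).
Proof. intros Hn; pose proof (le_INR _ _ (fib_monotone 3 n Hn)); simpl in *; lra. Qed.

Lemma frac_eq_sub_INR x (k : nat) : INR k <= x < INR k + 1 -> frac x = x - INR k.
Proof.
  intros Hx; unfold frac.
  replace (Int_part x) with (Z.of_nat k); [now rewrite <- INR_IZR_INZ|].
  apply Int_part_spec; rewrite <- INR_IZR_INZ; lra.
Qed.

Section FFinv_on_block.
Variables (K : nat) (y : R).
Hypothesis HK : (3 <= K)%nat.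
Hypothesis Hy : INR (fib K) <= y < INR (fib (S K)).

Lemma FFinv_spec : 1 <= FFinv y /\ FF (FFinv y) = y.
Proof.
  apply (epsilon_spec (inhabits 1) (fun x => 1 <= x /\ FF x = y)).
  destruct (IVT_cor (fun t => FF t - y) (INR K) (INR K + 1)) as [z [Hz Hzy]].
  - intros t; apply continuity_pt_minus; [apply continuous_FF|].
    apply continuity_pt_const; intros ? ?; reflexivity.
  - lra.
  - rewrite <- S_INR, !FF_INR.
    assert (INR (fib K) - y <= 0) by lra; assert (0 <= INR (fib (S K)) - y) by lra; nra.
  - pose proof (le_3_INR K HK); exists z; lra.
Qed.

(* [FF_lt_3] rules out a preimage in [1, 2), where FF is not known to be monotone. *)
Lemma FFinv_bounds : INR K <= FFinv y < INR K + 1.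
Proof.
  destruct FFinv_spec as [H1 HFF]; set (x := FFinv y) in *.
  pose proof (fib_ge_3 K HK); pose proof (le_3_INR K HK).
  assert (Hx2 : 2 <= x) by (destruct (Rle_lt_dec 2 x); [|pose proof (FF_lt_3 x)]; lra).
  split.
  - destruct (Rle_lt_dec (INR K) x) as [h|h]; [exact h|].
    pose proof (FF_increasing x (INR K) Hx2 h); rewrite FF_INR in *; lra.
  - destruct (Rle_lt_dec (INR K + 1) x) as [h|h]; [|exact h].
    pose proof (FF_le_increasing (INR K + 1) x ltac:(lra) h).
    rewrite <- S_INR, FF_INR in *; lra.
Qed.

Lemma frac_FFinv_le_iff beta : 0 <= beta <= 1 ->
  frac (FFinv y) <= beta <-> y <= FF (INR K + beta).
Proof.
  intros Hb; destruct FFinv_spec as [_ HFF]; pose proof FFinv_bounds as Hx.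
  rewrite (frac_eq_sub_INR _ K Hx); set (x := FFinv y) in *.
  pose proof (le_3_INR K HK).
  split; intros h.
  - rewrite <- HFF; apply FF_le_increasing; lra.
  - destruct (Rle_lt_dec (x - INR K) beta) as [h'|h']; [exact h'|].
    pose proof (FF_increasing (INR K + beta) x ltac:(lra) ltac:(lra)); lra.
Qed.

End FFinv_on_block.

Definition count_to (P : nat -> bool) (N : nat) : nat := length (filter P (seq 1 N)).

Lemma count_to_S P N : count_to P (S N) = (count_to P N + Nat.b2n (P (S N)))%nat.
Proof.
  unfold count_to; rewrite seq_S, filter_app, length_app; simpl.
  destruct (P (S N)); reflexivity.
Qed.

Lemma count_to_le P N : (count_to P N <= N)%nat.
Proof. induction N; [reflexivity|]; rewrite count_to_S; destruct (P (S N)); simpl; lia. Qed.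

Lemma count_to_incl P Q N :
  (forall n, P n = true -> Q n = true) -> (count_to P N <= count_to Q N)%nat.
Proof.
  intros HPQ; induction N; [reflexivity|]; rewrite !count_to_S.
  destruct (P (S N)) eqn:E; [rewrite (HPQ _ E)|]; simpl; lia.
Qed.

Lemma count_to_add P1 P2 Q1 Q2 N :
  (forall n, (Nat.b2n (P1 n) + Nat.b2n (P2 n) = Nat.b2n (Q1 n) + Nat.b2n (Q2 n))%nat) ->
  (count_to P1 N + count_to P2 N = count_to Q1 N + count_to Q2 N)%nat.
Proof.
  intros H; induction N; [reflexivity|]; rewrite !count_to_S; pose proof (H (S N)); lia.
Qed.

Lemma count_to_le_threshold P q N :
  (forall n, P n = true -> INR n <= q) -> 0 <= q -> INR (count_to P N) <= q.
Proof.
  intros HP Hq; induction N; [simpl; lra|]; rewrite count_to_S, plus_INR.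
  destruct (P (S N)) eqn:E; simpl; [|lra].
  pose proof (HP _ E); pose proof (le_INR _ _ (count_to_le P N)); rewrite S_INR in *; lra.
Qed.

Lemma count_to_ge_threshold P q N :
  (forall n, INR n < q -> P n = true) -> Rmin (INR N) (q - 1) <= INR (count_to P N).
Proof.
  intros HP; induction N; [apply Rmin_l|]; rewrite count_to_S, plus_INR, S_INR.
  destruct (Rlt_le_dec (INR N + 1) q) as [h|h].
  - rewrite (HP (S N)) by (rewrite S_INR; lra); rewrite Rmin_left in IHN by lra.
    pose proof (Rmin_l (INR N + 1) (q - 1)); simpl; lra.
  - rewrite Rmin_right in * by lra; destruct (P (S N)); simpl; lra.
Qed.

Lemma count_to_threshold P q N :
  (forall n, INR n < q -> P n = true) -> (forall n, P n = true -> INR n <= q) ->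
  0 <= q <= INR N -> q - 1 <= INR (count_to P N) <= q.
Proof.
  intros Hlt Hle Hq; split; [|apply count_to_le_threshold; tauto].
  pose proof (count_to_ge_threshold P q N Hlt); rewrite Rmin_right in * by lra; lra.
Qed.

Lemma Rpower_le_iff_l c x y : 0 < c -> 0 < x -> 0 < y ->
  Rpower x c <= Rpower y c <-> x <= y.
Proof.
  intros Hc Hx Hy; split; intros H; [|apply Rle_Rpower_l; lra].
  destruct (Rle_lt_dec x y) as [h|h]; [exact h|].
  pose proof (Rlt_Rpower_l y x c Hc ltac:(lra)); lra.
Qed.

Lemma Rpower_lt_iff_l c x y : 0 < c -> 0 < x -> 0 < y ->
  Rpower x c < Rpower y c <-> x < y.
Proof.
  intros Hc Hx Hy; pose proof (Rpower_le_iff_l c y x Hc Hy Hx) as Hle.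
  split; intros H; apply Rnot_le_lt; intros h; apply Hle in h; lra.
Qed.

Lemma Rpower_ge_1 x c : 1 <= x -> 0 <= c -> 1 <= Rpower x c.
Proof. intros; rewrite <- (Rpower_O x) by lra; apply Rle_Rpower; lra. Qed.

Lemma Rpower_le_self x c : 1 <= x -> c <= 1 -> Rpower x c <= x.
Proof. intros; rewrite <- (Rpower_1 x) at 2 by lra; apply Rle_Rpower; lra. Qed.

Lemma Rpower_sub_le c x y : 0 <= c <= 1 -> 1 <= y <= x ->
  Rpower x c - Rpower y c <= x - y.
Proof.
  intros Hc Hxy; set (d := x / y).
  assert (Hd : 1 <= d) by (unfold d; apply Rmult_le_reg_r with y; [lra|]; field_simplify; lra).
  assert (Hx : x = y * d) by (unfold d; field; lra).
  rewrite Hx, <- Rpower_mult_distr by lra.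
  pose proof (Rpower_le_self d c Hd ltac:(lra)); pose proof (Rpower_le_self y c ltac:(lra) ltac:(lra)).
  pose proof (Rpower_ge_1 d c Hd ltac:(lra)); pose proof (Rpower_ge_1 y c ltac:(lra) ltac:(lra)).
  nra.
Qed.

Lemma Rpower_Rabs_sub_le c x y : 0 <= c <= 1 -> 1 <= x -> 1 <= y ->
  Rabs (Rpower x c - Rpower y c) <= Rabs (x - y).
Proof.
  intros Hc Hx Hy; destruct (Rle_lt_dec y x) as [h|h].
  - pose proof (Rpower_sub_le c x y Hc ltac:(lra)).
    pose proof (Rle_Rpower_l y x c ltac:(lra) ltac:(lra)).
    rewrite !Rabs_right by lra; lra.
  - pose proof (Rpower_sub_le c y x Hc ltac:(lra)).
    pose proof (Rle_Rpower_l x y c ltac:(lra) ltac:(lra)).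
    rewrite !Rabs_left1 by lra; lra.
Qed.

Section Root.
Variable a : nat.
Hypothesis Ha : (1 <= a)%nat.

Lemma inv_INR_bounds : 0 < 1 / INR a <= 1.
Proof.
  pose proof (le_INR _ _ Ha); simpl in *; split; [apply Rdiv_lt_0_compat; lra|].
  apply Rmult_le_reg_r with (INR a); [lra|]; field_simplify; lra.
Qed.

Lemma Rpower_pow_inv x : 0 < x -> Rpower (x ^ a) (1 / INR a) = x.
Proof.
  intros Hx; pose proof (le_INR _ _ Ha); simpl in *.
  rewrite <- Rpower_pow, Rpower_mult by lra.
  replace (INR a * (1 / INR a)) with 1 by (field; lra); apply Rpower_1, Hx.
Qed.

Lemma pow_le_iff_root x y : 0 < x -> 0 < y -> x ^ a <= y <-> x <= Rpower y (1 / INR a).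
Proof.
  intros Hx Hy; pose proof inv_INR_bounds.
  rewrite <- (Rpower_le_iff_l (1 / INR a)), Rpower_pow_inv by (auto; lra || apply pow_lt, Hx).
  reflexivity.
Qed.

Lemma pow_lt_iff_root x y : 0 < x -> 0 < y -> x ^ a < y <-> x < Rpower y (1 / INR a).
Proof.
  intros Hx Hy; pose proof inv_INR_bounds.
  rewrite <- (Rpower_lt_iff_l (1 / INR a)), Rpower_pow_inv by (auto; lra || apply pow_lt, Hx).
  reflexivity.
Qed.

End Root.

Lemma Rabs_le_drift (x : nat -> R) d k n :
  (forall j, (j < n)%nat -> Rabs (x (S (k + j)) - x (k + j)%nat) <= d) ->
  Rabs (x (k + n)%nat) <= Rabs (x k) + INR n * d.
Proof.
  induction n as [|n IH]; intros Hstep; [rewrite Nat.add_0_r; simpl; lra|].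
  rewrite <- plus_n_Sm, S_INR.
  pose proof (Hstep n ltac:(lia)); pose proof (IH ltac:(intros; apply Hstep; lia)).
  pose proof (Rabs_triang_inv (x (S (k + n))) (x (k + n)%nat)); lra.
Qed.

Lemma Rabs_div_sub_le s t l w e : 0 <= l -> 4 <= w ->
  Rabs (s - l * w) <= e -> Rabs (t - w) <= 2 -> Rabs (s / t - l) <= 2 * (e + 2 * l) / w.
Proof.
  intros Hl Hw Hs Ht; apply Rabs_le_between in Hs; apply Rabs_le_between in Ht.
  replace (s / t - l) with ((s - l * t) / t) by (field; lra).
  unfold Rdiv; rewrite Rabs_mult, Rabs_inv, (Rabs_right t) by lra.
  assert (Rabs (s - l * t) <= e + 2 * l) by (apply Rabs_le; nra).
  assert (/ t <= 2 / w)
    by (replace (2 / w) with (/ (w / 2)) by (field; lra); apply Rinv_le_contravar; lra).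
  apply Rle_trans with ((e + 2 * l) * (2 / w)); [|right; field; lra].
  apply Rmult_le_compat; auto using Rabs_pos; left; apply Rinv_0_lt_compat; lra.
Qed.

Definition INR_ltb (X : R) (n : nat) : bool := if Rlt_dec (INR n) X then true else false.
Definition INR_leb (X : R) (n : nat) : bool := if Rle_dec (INR n) X then true else false.

Lemma count_to_INR_ltb X N : 0 <= X <= INR N ->
  X - 1 <= INR (count_to (INR_ltb X) N) <= X.
Proof.
  intros HX; apply count_to_threshold; auto; intros n; unfold INR_ltb;
    destruct Rlt_dec; lra || congruence.
Qed.

Lemma count_to_INR_ltb_leb X Y N : Y <= X -> 0 <= Y <= INR N ->
  Y - 1 <= INR (count_to (fun n => INR_ltb X n && INR_leb Y n)%bool N) <= Y.
Proof.
  intros HXY HY; apply count_to_threshold; auto; intros n; unfold INR_ltb, INR_leb;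
    destruct Rlt_dec, Rle_dec; simpl; lra || congruence.
Qed.

Section Asymptotics.
Variable a : nat.
Hypothesis Ha : (1 <= a)%nat.
Variable beta : R.
Hypothesis Hb : 0 <= beta <= 1.

Definition growth : R := Rpower phi (1 / INR a).
Definition growth_coef : R := Rpower binet_c (1 / INR a).
Definition density : R := (Rpower phi (beta / INR a) - 1) / (Rpower phi (1 / INR a) - 1).

Definition block_start (K : nat) : R := Rpower (INR (fib K)) (1 / INR a).
Definition block_split (K : nat) : R := Rpower (FF (INR K + beta)) (1 / INR a).

Definition frac_FFinv_leb (n : nat) : bool :=
  if Rle_dec (frac (FFinv (INR n ^ a))) beta then true else false.

Definition count_beta_below (m K : nat) : nat :=
  count_to (fun n => INR_ltb (block_start K) n && frac_FFinv_leb n)%bool (fib m).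

Lemma growth_gt_1 : 1 < growth.
Proof.
  unfold growth; rewrite <- (Rpower_O phi phi_pos) at 1.
  pose proof phi_bounds; pose proof (inv_INR_bounds a Ha); apply Rpower_lt; lra.
Qed.

Lemma growth_coef_pos : 0 < growth_coef.
Proof. apply exp_pos. Qed.

Lemma Rpower_phi_div t : Rpower phi (t / INR a) = Rpower growth t.
Proof. unfold growth; rewrite Rpower_mult; f_equal; unfold Rdiv; ring. Qed.

Lemma density_mul : density * (growth - 1) = Rpower growth beta - 1.
Proof.
  unfold density; rewrite Rpower_phi_div; fold growth.
  pose proof growth_gt_1; field; lra.
Qed.

Lemma density_nonneg : 0 <= density.
Proof.
  unfold density; rewrite Rpower_phi_div; fold growth; pose proof growth_gt_1.
  pose proof (Rpower_ge_1 growth beta ltac:(lra) ltac:(lra)).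
  apply Rmult_le_pos; [lra|]; left; apply Rinv_0_lt_compat; lra.
Qed.

Lemma root_approx y t : 1 <= t -> 1 <= y -> Rabs (y - binet_c * Rpower phi t) <= 1 ->
  Rabs (Rpower y (1 / INR a) - growth_coef * Rpower growth t) <= 1.
Proof.
  intros Ht Hy Happrox; pose proof binet_c_bounds; pose proof (inv_INR_bounds a Ha).
  assert (Hmain : 1 <= binet_c * Rpower phi t).
  { pose proof binet_c_phi_gt_1; pose proof phi_bounds.
    assert (phi <= Rpower phi t) by (rewrite <- (Rpower_1 phi) at 1 by lra; apply Rle_Rpower; lra).
    nra. }
  replace (growth_coef * Rpower growth t) with (Rpower (binet_c * Rpower phi t) (1 / INR a)).
  - eapply Rle_trans; [apply Rpower_Rabs_sub_le|]; auto; lra.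
  - unfold growth_coef, growth; rewrite <- Rpower_mult_distr by (lra || apply exp_pos).
    rewrite !Rpower_mult; do 2 f_equal; ring.
Qed.

Lemma FF_block_bounds K : (3 <= K)%nat ->
  INR (fib K) <= FF (INR K + beta) <= INR (fib (S K)).
Proof.
  intros HK; pose proof (le_3_INR K HK).
  rewrite <- !FF_INR, S_INR; split; apply FF_le_increasing; lra.
Qed.

Lemma block_start_approx K : (3 <= K)%nat ->
  Rabs (block_start K - growth_coef * Rpower growth (INR K)) <= 1.
Proof.
  intros HK; pose proof (le_3_INR K HK).
  apply root_approx; [lra|apply fib_ge_1|].
  rewrite <- FF_INR; apply FF_binet_approx; lra.
Qed.

Lemma block_split_approx K : (3 <= K)%nat ->
  Rabs (block_split K - growth_coef * Rpower growth (INR K + beta)) <= 1.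
Proof.
  intros HK; pose proof (le_3_INR K HK).
  pose proof (fib_ge_1 K); pose proof (FF_block_bounds K HK).
  apply root_approx; [lra|lra|apply FF_binet_approx; lra].
Qed.

Lemma block_start_ge_1 K : 1 <= block_start K.
Proof. pose proof (inv_INR_bounds a Ha); apply Rpower_ge_1; [apply fib_ge_1|lra]. Qed.

Lemma block_start_le_split K : (3 <= K)%nat ->
  block_start K <= block_split K <= block_start (S K).
Proof.
  intros HK; pose proof (fib_ge_1 K); pose proof (FF_block_bounds K HK).
  pose proof (inv_INR_bounds a Ha).
  unfold block_start, block_split; split; apply Rle_Rpower_l; lra.
Qed.

Lemma block_start_le_fib K m : (K <= m)%nat -> block_start K <= INR (fib m).
Proof.
  intros HKm; pose proof (inv_INR_bounds a Ha); pose proof (fib_ge_1 K).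
  pose proof (le_INR _ _ (fib_monotone K m HKm)).
  apply Rle_trans with (INR (fib K)); [apply Rpower_le_self|]; lra.
Qed.

Lemma frac_FFinv_leb_iff n K : (3 <= K)%nat ->
  block_start K <= INR n < block_start (S K) ->
  frac_FFinv_leb n = true <-> INR n <= block_split K.
Proof.
  intros HK Hn; pose proof (fib_ge_1 K); pose proof (fib_ge_1 (S K)).
  pose proof (FF_block_bounds K HK); pose proof (inv_INR_bounds a Ha).
  assert (Hn0 : 0 < INR n) by (pose proof (block_start_ge_1 K); lra).
  pose proof (pow_lt (INR n) a Hn0).
  unfold block_start, block_split in *; destruct Hn as [Hlo Hhi].
  assert (Hy : INR (fib K) <= INR n ^ a < INR (fib (S K))).
  { split.
    - apply Rnot_lt_le; intros h.
      apply (pow_lt_iff_root a Ha _ (INR (fib K)) Hn0 ltac:(lra)) in h; lra.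
    - apply pow_lt_iff_root; auto; lra. }
  rewrite <- pow_le_iff_root, <- (frac_FFinv_le_iff K _ HK Hy beta Hb) by (auto; lra).
  unfold frac_FFinv_leb; destruct Rle_dec; split; congruence || tauto.
Qed.

Lemma count_beta_below_S m K : (3 <= K)%nat ->
  (count_beta_below m (S K) + count_to (INR_ltb (block_start K)) (fib m) =
   count_beta_below m K +
   count_to (fun n => INR_ltb (block_start (S K)) n && INR_leb (block_split K) n)%bool (fib m))%nat.
Proof.
  intros HK; apply count_to_add; intros n.
  pose proof (block_start_le_split K HK); pose proof (frac_FFinv_leb_iff n K HK) as HB.
  unfold INR_ltb, INR_leb.
  destruct (Rlt_dec (INR n) (block_start K)); destruct (Rlt_dec (INR n) (block_start (S K)));
    destruct (Rle_dec (INR n) (block_split K)); destruct (frac_FFinv_leb n) eqn:E;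
    simpl; lra || reflexivity.
Qed.

Lemma count_beta_below_increment m K : (3 <= K)%nat -> (S K <= m)%nat ->
  Rabs ((INR (count_beta_below m (S K)) - density * growth_coef * Rpower growth (INR (S K)))
      - (INR (count_beta_below m K) - density * growth_coef * Rpower growth (INR K))) <= 3.
Proof.
  intros HK HKm.
  pose proof (f_equal INR (count_beta_below_S m K HK)) as Hcount; rewrite !plus_INR in Hcount.
  pose proof (block_start_le_split K HK); pose proof (block_start_le_fib (S K) m HKm).
  pose proof (block_start_ge_1 K).
  pose proof (count_to_INR_ltb (block_start K) (fib m) ltac:(lra)).
  pose proof (count_to_INR_ltb_leb (block_start (S K)) (block_split K) (fib m) ltac:(lra) ltac:(lra)).
  pose proof (block_start_approx K HK) as Hstart; pose proof (block_split_approx K HK) as Hsplit.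
  apply Rabs_le_between in Hstart; apply Rabs_le_between in Hsplit.
  assert (Hgap : density * growth_coef * Rpower growth (INR (S K))
                 - density * growth_coef * Rpower growth (INR K)
               = growth_coef * Rpower growth (INR K + beta) - growth_coef * Rpower growth (INR K)).
  { pose proof growth_gt_1.
    rewrite S_INR, !Rpower_plus, Rpower_1 by lra.
    transitivity (growth_coef * Rpower growth (INR K) * (density * (growth - 1))); [ring|].
    rewrite density_mul; ring. }
  apply Rabs_le; lra.
Qed.

Definition base_error : R := block_start 3 + density * growth_coef * Rpower growth (INR 3).

Lemma density_term_nonneg t : 0 <= density * growth_coef * Rpower growth t.
Proof.
  pose proof density_nonneg; pose proof growth_coef_pos; pose proof (exp_pos (t * ln growth)).
  apply Rmult_le_pos; [apply Rmult_le_pos|unfold Rpower]; lra.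
Qed.

Lemma count_beta_below_approx m : (3 <= m)%nat ->
  Rabs (INR (count_beta_below m m) - density * (growth_coef * Rpower growth (INR m)))
  <= base_error + 3 * INR m.
Proof.
  intros Hm.
  set (err K := INR (count_beta_below m K) - density * growth_coef * Rpower growth (INR K)).
  assert (Hdrift : Rabs (err (3 + (m - 3))%nat) <= Rabs (err 3%nat) + INR (m - 3) * 3).
  { apply Rabs_le_drift; intros j Hj; apply count_beta_below_increment; lia. }
  replace (3 + (m - 3))%nat with m in Hdrift by lia.
  assert (Hbase : INR (count_beta_below m 3) <= block_start 3).
  { eapply Rle_trans; [apply le_INR, count_to_incl|apply count_to_INR_ltb].
    - intros n; apply andb_prop.
    - split; [pose proof (block_start_ge_1 3); lra|apply block_start_le_fib; lia]. }
  assert (Rabs (err 3%nat) <= base_error).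
  { pose proof (pos_INR (count_beta_below m 3)); pose proof (density_term_nonneg (INR 3)).
    unfold err, base_error; apply Rabs_le; lra. }
  rewrite minus_INR in Hdrift by lia.
  unfold err in *; rewrite <- Rmult_assoc; pose proof (pos_INR 3); lra.
Qed.

Lemma cardA_approx m : (3 <= m)%nat ->
  Rabs (INR (cardA a m) - growth_coef * Rpower growth (INR m)) <= 2.
Proof.
  intros Hm; change (cardA a m) with (count_to (INR_ltb (block_start m)) (fib m)).
  pose proof (block_start_ge_1 m); pose proof (block_start_le_fib m m (le_n m)).
  pose proof (count_to_INR_ltb (block_start m) (fib m) ltac:(lra)).
  pose proof (block_start_approx m Hm) as Happrox; apply Rabs_le_between in Happrox.
  apply Rabs_le; lra.
Qed.

Definition ratio_error_const : R := 2 * (base_error + 3 + 2 * density) / growth_coef.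

Lemma cardA_ratio_error m : (3 <= m)%nat -> 4 <= growth_coef * Rpower growth (INR m) ->
  Rabs (INR (cardA_beta a m beta) / INR (cardA a m) - density)
  <= ratio_error_const * INR m / Rpower growth (INR m).
Proof.
  intros Hm HW; change (cardA_beta a m beta) with (count_beta_below m m).
  pose proof growth_coef_pos; pose proof density_nonneg.
  assert (0 <= base_error)
    by (pose proof (block_start_ge_1 3); pose proof (density_term_nonneg (INR 3));
        unfold base_error; lra).
  pose proof (exp_pos (INR m * ln growth)) as HP; fold (Rpower growth (INR m)) in HP.
  pose proof (le_3_INR m Hm).
  apply Rle_trans with (2 * (base_error + 3 * INR m + 2 * density)
                        / (growth_coef * Rpower growth (INR m))).
  - apply Rabs_div_sub_le; auto; [apply count_beta_below_approx|apply cardA_approx]; auto.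
  - unfold ratio_error_const; set (P := Rpower growth (INR m)) in *.
    apply Rmult_le_reg_r with (growth_coef * P / 2); [apply Rdiv_lt_0_compat; nra|].
    field_simplify; [nra|lra|lra].
Qed.

Lemma growth_coef_pow_eventually_ge b :
  exists M, forall m, (M <= m)%nat -> b <= growth_coef * Rpower growth (INR m).
Proof.
  pose proof growth_gt_1; pose proof growth_coef_pos.
  destruct (Pow_x_infinity growth ltac:(rewrite Rabs_right; lra) (b / growth_coef)) as [M HM].
  exists M; intros m Hm; specialize (HM m Hm).
  rewrite Rabs_right in HM by (left; apply pow_lt; lra).
  rewrite Rpower_pow by lra.
  apply Rmult_le_reg_l with (/ growth_coef); [apply Rinv_0_lt_compat; lra|].
  rewrite <- Rmult_assoc, Rinv_l by lra; unfold Rdiv in HM; lra.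
Qed.

End Asymptotics.

Theorem lemma4p9 (a : nat) (Ha : (1 <= a)%nat) (beta : R) (Hb : 0 <= beta <= 1) :
  exists C : R, exists M : nat, forall m : nat, (M <= m)%nat ->
    Rabs (INR (cardA_beta a m beta) / INR (cardA a m)
          - (Rpower phi (beta / INR a) - 1) / (Rpower phi (1 / INR a) - 1))
    <= C * INR m * Rpower phi (- INR m / INR a).
Proof.
  destruct (growth_coef_pow_eventually_ge a Ha 4) as [M HM].
  exists (ratio_error_const a beta), (3 + M)%nat; intros m Hm.
  rewrite (Rpower_phi_div a (- INR m)), Rpower_Ropp.
  apply (cardA_ratio_error a Ha beta Hb m); [lia | apply HM; lia].
Qed.
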